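(* If $t$ is a canonical term of $\Phi$ and $t\rightarrow u$ in $\Phi$, then $\langle\!\langle t\rangle\!\rangle\rightarrow_v\langle\!\langle u\rangle\!\rangle$.
   Context: $\lambda$-terms: $M::=x\mid\lambda x.M\mid MN$, variables from a set $\Upsilon$ with a fixed total order, $FV(M)$ the ordered sequence of free variables. Values $V::=x\mid\lambda x.M$; weak call-by-value reduction $\rightarrow_v$: $(\lambda x.M)V\rightarrow_v M\{V/x\}$ for values $V$, closed under $ML$ and $LM$ contexts (no reduction under $\lambda$). $\Phi$: binary function symbol $\mathbf{app}$, constructors $c_{x,M}$ ($M$ a $\lambda$-term, $x\in\Upsilon$) of arity the length of $FV(\lambda x.M)$; $[\![x]\!]=x$, $[\![\lambda x.M]\!]=c_{x,M}(x_1,\dots,x_n)$ with $FV(\lambda x.M)=x_1,\dots,x_n$, $[\![MN]\!]=\mathbf{app}([\![M]\!],[\![N]\!])$; rules $\mathbf{app}(c_{x,M}(x_1,\dots,x_n),x)\rightarrow[\![M]\!]$; rewriting is call-by-value (a step replaces anywhere a subterm $l\sigma$ by $r\sigma$, $\sigma$ mapping variables to constructor terms, i.e. closed terms built only from constructors). $\langle\!\langle x\rangle\!\rangle=x$, $\langle\!\langle\mathbf{app}(u,v)\rangle\!\rangle=\langle\!\langle u\rangle\!\rangle\langle\!\langle v\rangle\!\rangle$, $\langle\!\langle c_{x,M}(t_1,\dots,t_n)\rangle\!\rangle=(\lambda x.M)\{\langle\!\langle t_1\rangle\!\rangle/x_1,\dots,\langle\!\langle t_n\rangle\!\rangle/x_n\}$.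 A closed term $t$ is canonical if it is a constructor term or $t=\mathbf{app}(u,v)$ with $u,v$ canonical. *)

From Stdlib Require List.
From mathcomp Require Import all_boot.
Set Implicit Arguments. Unset Strict Implicit. Unset Printing Implicit Defensive.

Inductive lam : Type :=
| Var : nat -> lam
| Lam : nat -> lam -> lam
| App : lam -> lam -> lam.

Fixpoint lsize (M : lam) : nat :=
  match M with
  | Var _ => 1
  | Lam _ N => (lsize N).+1
  | App M1 M2 => (lsize M1 + lsize M2).+1
  end.

Fixpoint fvl (M : lam) : seq nat :=
  match M with
  | Var x => [:: x]
  | Lam x N => [seq y <- fvl N | y != x]
  | App M1 M2 => fvl M1 ++ fvl M2
  end.

Definition FV (M : lam) : seq nat := sort leq (undup (fvl M)).

Fixpoint allvars (M : lam) : seq nat :=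
  match M with
  | Var x => [:: x]
  | Lam x N => x :: allvars N
  | App M1 M2 => allvars M1 ++ allvars M2
  end.

(** renaming of free y into z (correct when z does not occur in M) *)
Fixpoint rn (y z : nat) (M : lam) : lam :=
  match M with
  | Var w => if w == y then Var z else Var w
  | Lam w N => if w == y then Lam w N else Lam w (rn y z N)
  | App M1 M2 => App (rn y z M1) (rn y z M2)
  end.

Fixpoint lookup (y : nat) (s : seq (nat * lam)) : option lam :=
  match s with
  | [::] => None
  | p :: s' => if p.1 == y then Some p.2 else lookup y s'
  end.

(** Simultaneous capture-avoiding substitution (Curry style: bound variable
    renamed to a fresh one when capture would occur); fuel = size of term. *)
Fixpoint ssub_aux (n : nat) (s : seq (nat * lam)) (M : lam) : lam :=
  match n with
  | 0 => M
  | n'.+1 =>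
    match M with
    | Var y => match lookup y s with Some N => N | None => Var y end
    | App M1 M2 => App (ssub_aux n' s M1) (ssub_aux n' s M2)
    | Lam y N =>
      let s' := [seq p <- s | (p.1 != y) && (p.1 \in fvl N)] in
      if has (fun p => y \in fvl p.2) s' then
        let z := (\max_(v <- y :: allvars N ++ flatten [seq allvars p.2 | p <- s']) v).+1 in
        Lam z (ssub_aux n' s' (rn y z N))
      else Lam y (ssub_aux n' s' N)
    end
  end.

Definition ssub (s : seq (nat * lam)) (M : lam) : lam := ssub_aux (lsize M) s M.

Definition subst1 (M : lam) (x : nat) (V : lam) : lam := ssub [:: (x, V)] M.

Definition is_value (M : lam) : Prop :=
  match M with Var _ | Lam _ _ => True | App _ _ => False end.

Inductive vstep : lam -> lam -> Prop :=
| vbeta x M V : is_value V -> vstep (App (Lam x M) V) (subst1 M x V)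
| vappl M M' L : vstep M M' -> vstep (App M L) (App M' L)
| vappr M M' L : vstep M M' -> vstep (App L M) (App L M').

(** * The first-order TRS Phi. Constructors c_{x,M} are labelled by (x, M),
    arguments are stored as a list (arity = size (FV (Lam x M))). *)
Inductive term : Type :=
| Tvar : nat -> term
| Tapp : term -> term -> term
| Tcon : nat -> lam -> list term -> term.

Fixpoint enc (M : lam) : term :=
  match M with
  | Var x => Tvar x
  | Lam x N => Tcon x N (map Tvar (FV (Lam x N)))
  | App M1 M2 => Tapp (enc M1) (enc M2)
  end.

Fixpoint tsubst (sigma : nat -> term) (t : term) : term :=
  match t with
  | Tvar x => sigma x
  | Tapp u v => Tapp (tsubst sigma u) (tsubst sigma v)
  | Tcon x M ts => Tcon x M (map (tsubst sigma) ts)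
  end.

Inductive cterm : term -> Prop :=
| cterm_con x M ts :
    size ts = size (FV (Lam x M)) ->
    (forall t, List.In t ts -> cterm t) ->
    cterm (Tcon x M ts).

Inductive canonical : term -> Prop :=
| canon_c t : cterm t -> canonical t
| canon_app u v : canonical u -> canonical v -> canonical (Tapp u v).

(** call-by-value rewriting in Phi: rule app(c_{x,M}(x1..xn), x) -> [[M]],
    instantiated by sigma mapping variables to constructor terms, at any position *)
Inductive tstep : term -> term -> Prop :=
| tstep_root x M (sigma : nat -> term) :
    (forall y, cterm (sigma y)) ->
    tstep (tsubst sigma (Tapp (Tcon x M (map Tvar (FV (Lam x M)))) (Tvar x)))
          (tsubst sigma (enc M))
| tstep_appl u u' v : tstep u u' -> tstep (Tapp u v) (Tapp u' v)
| tstep_appr u v v' : tstep v v' -> tstep (Tapp u v) (Tapp u v')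
| tstep_con x M ts1 t t' ts2 :
    tstep t t' -> tstep (Tcon x M (ts1 ++ t :: ts2)) (Tcon x M (ts1 ++ t' :: ts2)).

Fixpoint dec (t : term) : lam :=
  match t with
  | Tvar x => Var x
  | Tapp u v => App (dec u) (dec v)
  | Tcon x M ts => ssub (zip (FV (Lam x M)) (map dec ts)) (Lam x M)
  end.

From mathcomp Require Import all_boot.

Set Implicit Arguments.
Unset Strict Implicit.
Unset Printing Implicit Defensive.

(* Decoding a constructor term yields a closed abstraction, hence a closed value.
   On closed substitutions the renaming clause of [ssub] never fires, so [ssub]
   agrees with the naive parallel substitution [psub], for which composition is
   plain function composition.  With this, the decoding of an instance of the
   rule app(c_{x,M}(x1..xn), x) -> [[M]] is literally a beta_v-redex and its
   contractum.  Constructor terms contain no redex, so every other step of a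
   canonical term happens below an application and the claim follows by
   induction on the step. *)

Definition shadow (f : nat -> lam) (y : nat) : nat -> lam :=
  fun z => if z == y then Var y else f z.

Fixpoint psub (f : nat -> lam) (M : lam) : lam :=
  match M with
  | Var y => f y
  | App M1 M2 => App (psub f M1) (psub f M2)
  | Lam y N => Lam y (psub (shadow f y) N)
  end.

Lemma psub_ext M f g : {in fvl M, f =1 g} -> psub f M = psub g M.
Proof.
elim: M f g => [y|y N IH|M1 IH1 M2 IH2] f g /= fg.
- by apply: fg; rewrite inE.
- congr Lam; apply: IH => z Nz; rewrite /shadow; case: eqP => // /eqP zy.
  by apply: fg; rewrite mem_filter zy.
- by rewrite (IH1 f g) ?(IH2 f g) // => z Mz; apply: fg; rewrite mem_cat Mz ?orbT.
Qed.

Lemma psub_closed M f : fvl M = [::] -> psub f M = M.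
Proof.
move=> M_closed; have : {in fvl M, f =1 Var} by move=> z; rewrite M_closed.
elim: M f {M_closed} => [y|y N IH|M1 IH1 M2 IH2] f /= fV.
- by apply: fV; rewrite inE.
- congr Lam; apply: IH => z Nz; rewrite /shadow; case: eqP => [->//|/eqP zy].
  by apply: fV; rewrite mem_filter zy.
- by rewrite IH1 ?IH2 // => z Mz; apply: fV; rewrite mem_cat Mz ?orbT.
Qed.

Lemma fvl_psub M f y :
  y \in fvl (psub f M) -> exists2 z, z \in fvl M & y \in fvl (f z).
Proof.
elim: M f => [w|w N IH|M1 IH1 M2 IH2] f /=.
- by exists w; rewrite ?inE.
- rewrite mem_filter => /andP[yw /IH[z Nz]]; rewrite /shadow.
  case: eqP => [_|/eqP zw]; first by rewrite inE (negPf yw).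
  by exists z; rewrite // mem_filter zw.
- by rewrite mem_cat => /orP[/IH1|/IH2] [z Mz yz]; exists z; rewrite // mem_cat Mz ?orbT.
Qed.

(* The side condition rules out capture: each [g z] is a variable or closed. *)
Lemma psub_comp M g h : (forall z, g z = Var z \/ fvl (g z) = [::]) ->
  psub h (psub g M) = psub (fun z => psub h (g z)) M.
Proof.
elim: M g h => [y|y N IH|M1 IH1 M2 IH2] g h //= g_ok; last by rewrite IH1 // IH2.
congr Lam; rewrite IH; last first.
  by move=> z; rewrite /shadow; case: eqP => [->|_]; [left|apply: g_ok].
apply: psub_ext => z _; rewrite /shadow; case zy: (z == y); first by rewrite /= eqxx.
by case: (g_ok z) => [->|g_closed] /=; rewrite ?zy ?psub_closed.
Qed.

Lemma In_filter T (a : pred T) x s : List.In x (filter a s) -> List.In x s.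
Proof. by elim: s => //= y s IH; case: (a y) => /= [[->|/IH]|/IH]; auto. Qed.

Lemma In_map T1 T2 (f : T1 -> T2) y s :
  List.In y (map f s) -> exists2 x, List.In x s & y = f x.
Proof. by elim: s => //= x s IH [<-|/IH[x' ? ->]]; [exists x|exists x']; auto. Qed.
Arguments In_map {T1 T2} f {y s}.

Lemma In_zip_snd T1 T2 (a : seq T1) (b : seq T2) p :
  List.In p (zip a b) -> List.In p.2 b.
Proof. by elim: a b => [|x a IH] [|y b] //= [<-|/IH]; auto. Qed.

Definition closed_subst (s : seq (nat * lam)) : Prop :=
  forall p, List.In p s -> fvl p.2 = [::].

Definition subst_fun (s : seq (nat * lam)) (y : nat) : lam :=
  if lookup y s is Some N then N else Var y.

Lemma closed_subst_filter (a : pred (nat * lam)) s :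
  closed_subst s -> closed_subst (filter a s).
Proof. by move=> s_closed p sp; apply: s_closed; apply: In_filter sp. Qed.

Lemma lookup_filter_keep (a : pred (nat * lam)) z s :
  (forall p, p.1 = z -> a p) -> lookup z (filter a s) = lookup z s.
Proof.
move=> az; elim: s => //= p s IH; case ap: (a p) => /=; rewrite IH //.
by case: eqP => // /az; rewrite ap.
Qed.

Lemma lookup_filter_none (a : pred (nat * lam)) z s :
  (forall p, p.1 = z -> ~~ a p) -> lookup z (filter a s) = None.
Proof.
move=> naz; elim: s => //= p s IH; case ap: (a p) => //=.
by case: eqP => // /naz; rewrite ap.
Qed.

Lemma has_closed s y : closed_subst s -> has (fun p => y \in fvl p.2) s = false.
Proof.
elim: s => //= p s IH s_closed; rewrite (s_closed p) ?IH //=; last by left.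
by move=> q sq; apply: s_closed; right.
Qed.

Lemma ssub_aux_psub n s M :
  lsize M <= n -> closed_subst s -> ssub_aux n s M = psub (subst_fun s) M.
Proof.
elim: n s M => [|n IH] s [y|y N|M1 M2] //= Mn s_closed.
- set s' := filter _ s; have s'_closed : closed_subst s' by apply: closed_subst_filter.
  rewrite has_closed //; congr Lam; rewrite IH //.
  apply: psub_ext => z Nz; rewrite /shadow /subst_fun.
  case: eqP => [->|/eqP zy].
    by rewrite lookup_filter_none // => p ->; rewrite eqxx.
  by rewrite lookup_filter_keep // => p ->; rewrite zy Nz.
- rewrite ltnS in Mn; rewrite !IH //.
  + by apply: leq_trans Mn; rewrite leq_addl.
  + by apply: leq_trans Mn; rewrite leq_addr.
Qed.

Lemma ssub_psub s M : closed_subst s -> ssub s M = psub (subst_fun s) M.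
Proof. exact: ssub_aux_psub. Qed.

Lemma ssub_lam_value s y N : is_value (ssub s (Lam y N)).
Proof. by rewrite /ssub /=; case: ifP. Qed.

Lemma fvl_psub_nil M f :
  {in fvl M, forall z, fvl (f z) = [::]} -> fvl (psub f M) = [::].
Proof.
move=> f_closed; case e: (fvl _) => [|y l] //.
have [z Mz] : exists2 z, z \in fvl M & y \in fvl (f z).
  by apply: fvl_psub; rewrite e inE eqxx.
by rewrite f_closed.
Qed.

Lemma subst1_psub_shadow f x M : (forall z, fvl (f z) = [::]) ->
  subst1 (psub (shadow f x) M) x (f x) = psub f M.
Proof.
move=> f_closed; rewrite /subst1 ssub_psub; last by move=> p [<-|[]]; apply: f_closed.
rewrite psub_comp => [|z]; last by rewrite /shadow; case: eqP => [->|_]; [left|right].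
apply: psub_ext => z _; rewrite /shadow /subst_fun /=.
by case: eqP => [->|_] /=; rewrite ?eqxx ?psub_closed.
Qed.

Lemma vstep_beta_psub f x M : (forall z, fvl (f z) = [::]) -> is_value (f x) ->
  vstep (App (psub f (Lam x M)) (f x)) (psub f M).
Proof.
by move=> f_closed fx_value; rewrite -(subst1_psub_shadow x M f_closed); apply: vbeta.
Qed.

Lemma lookup_zip_In (a : seq nat) (b : seq lam) z : size a = size b -> z \in a ->
  exists2 N, lookup z (zip a b) = Some N & List.In N b.
Proof.
elim: a b => [|x a IH] [|y b] //= [ab]; rewrite inE eq_sym.
case: (x =P z) => [_ _|_ /= /(IH _ ab)[N ? ?]]; first by exists y; auto.
by exists N; auto.
Qed.

Lemma lookup_zip_map (f : nat -> lam) s z :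
  z \in s -> lookup z (zip s (map f s)) = Some (f z).
Proof.
by elim: s => //= w s IH; rewrite inE eq_sym; case: eqP => [->|_ /IH].
Qed.

Lemma mem_FV z M : (z \in FV M) = (z \in fvl M).
Proof. by rewrite /FV mem_sort mem_undup. Qed.

Lemma dec_cterm_closed t : cterm t -> fvl (dec t) = [::].
Proof.
elim=> x M ts size_ts _ ts_closed /=.
have dec_ts_closed : closed_subst (zip (FV (Lam x M)) (map dec ts)).
  by move=> p /In_zip_snd /(In_map dec)[t' ? ->]; apply: ts_closed.
rewrite ssub_psub //; apply: fvl_psub_nil => z; rewrite /subst_fun -mem_FV => FVz.
have [|N -> /(In_map dec)[t' ? ->]] := lookup_zip_In (b := map dec ts) _ FVz.
  by rewrite size_map.
exact: ts_closed.
Qed.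

Lemma dec_cterm_value t : cterm t -> is_value (dec t).
Proof. by case=> x M ts _ _; apply: ssub_lam_value. Qed.

Lemma dec_tsubst_enc sigma M : (forall y, cterm (sigma y)) ->
  dec (tsubst sigma (enc M)) = psub (fun z => dec (sigma z)) M.
Proof.
move=> sigma_c; elim: M => [y|y N _|M1 IH1 M2 IH2] //=; last by rewrite IH1 IH2.
rewrite -!map_comp ssub_psub /=; last first.
  by move=> p /In_zip_snd /(In_map _)[z _ ->]; exact: dec_cterm_closed (sigma_c z).
congr Lam; apply: psub_ext => z Nz; rewrite /shadow; case: eqP => // /eqP zy.
by rewrite /subst_fun lookup_zip_map // mem_FV /= mem_filter zy.
Qed.

Lemma cterm_tstep t u : cterm t -> ~ tstep t u.
Proof.
move=> ct tu; elim: tu ct => {t u}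
  [x M sigma _|u u' v _ _|u v v' _ _|x M ts1 t t' ts2 _ IH] ct;
  inversion ct as [? ? ? _ ts_c]; subst.
by apply/IH/ts_c/List.in_elt.
Qed.

Lemma canonical_app u v : canonical (Tapp u v) -> canonical u /\ canonical v.
Proof. by move=> c; inversion c as [t ct|]; [inversion ct|]. Qed.

Lemma dec_root_step x M sigma : (forall y, cterm (sigma y)) ->
  vstep (dec (tsubst sigma (Tapp (enc (Lam x M)) (Tvar x))))
        (dec (tsubst sigma (enc M))).
Proof.
move=> sigma_c; set f := fun z => dec (sigma z).
have f_closed z : fvl (f z) = [::] by apply: dec_cterm_closed.
have := vstep_beta_psub M f_closed (dec_cterm_value (sigma_c x)).
by rewrite -!dec_tsubst_enc.
Qed.

Theorem lemma6 (t u : term) :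
  canonical t -> tstep t u -> vstep (dec t) (dec u).
Proof.
move=> ct tu; elim: tu ct => {t u}.
- by move=> x M sigma sigma_c _; apply: (dec_root_step x M sigma_c).
- by move=> u u' v _ IH /canonical_app[cu _]; apply/vappl/IH.
- by move=> u v v' _ IH /canonical_app[_ cv]; apply/vappr/IH.
- move=> x M ts1 t t' ts2 tt' _ c; exfalso.
  by inversion c as [? ct|]; apply: (cterm_tstep ct); apply: tstep_con tt'.
Qed.
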